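(* Decompose the relative BRST operator as $\hat Q=\eta_0\,\mathcal X+\hat d$, where $\mathcal X=\beta_0+\sum_{n\neq0} n\,c_n\zeta_{-n}$ and $\hat d$ contains no $\eta_0$ (nor $\zeta_0$). Let $\mathcal P=\gamma_0$, so $[\mathcal X,\mathcal P]=1$. Define the tilded oscillators $\tilde b_n=b_n+n\zeta_n\gamma_0$ and $\tilde\eta_n=\eta_n+n c_n\gamma_0$ ($n\neq0$). Then the oscillators $\tilde b_n, c_n,\zeta_n,\tilde\eta_n,\beta_n,\gamma_n$ ($n\ne0$) satisfy the same (anti)commutation relations as the untilded ones and all commute with $\mathcal X$ and $\mathcal P$, and $\hat d$ commutes with both $\mathcal X$ and $\mathcal P$; i.e. when written in terms of the tilded oscillators (together with $x_n,\varphi_n$, $n\ne 0$, and the momenta), $\hat d$ is independent of $\mathcal X$ and $\mathcal P$.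
   Context: Same Fock space and BRST operator as follows. Fields/modes: $x_n$, $\varphi_n$ with $[x_m,x_n]=[\varphi_m,\varphi_n]=m\delta_{m+n,0}$; fermionic $b_n,c_n$ with $\{b_m,c_n\}=\delta_{m+n,0}$; fermionic $\zeta_n,\eta_n$ with $\{\zeta_m,\eta_n\}=\delta_{m+n,0}$; bosonic $\beta_n,\gamma_n$ with $[\gamma_m,\beta_n]=\delta_{m+n,0}$. $Q_B=\sum_m :c_{-m}(L^{matt}_m+L^{grav}_m+\tfrac12L^{bc}_m+L^{\zeta\eta}_m)+\eta_{-m}\beta_m:$ with $L^{matt}_n=\tfrac12\sum_m:x_mx_{n-m}:$, $L^{grav}_n=\sum_m:(-m\beta_m\gamma_{n-m}+\tfrac12\varphi_m\varphi_{n-m}):+\sqrt2 i(n+1)\varphi_n$, $L^{bc}_n=\sum_m(2n-m):b_mc_{n-m}:$, $L^{\zeta\eta}_n=-\sum_m m:\zeta_m\eta_{n-m}:$. One writes $Q_B=c_0L_0-b_0\sum_{n\ne0}n c_{-n}c_n+\hat Q$ with $\hat Q$ free of $b_0,c_0$. Explicitly $\hat d=\sum_{n\ne0}:c_{-n}(L^{matt}_n+L^{grav}_n+L'^{\zeta\eta}_n):+\sum_{n\ne0}\eta_{-n}\beta_n-\tfrac12\sum_{m,n\ne0,\,m+n\ne0}(m-n):c_{-m}c_{-n}b_{n+m}:$, where $L'^{\zeta\eta}_n$ is $L^{\zeta\eta}_n$ with the term containing $\eta_0$ removed. *)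

From HB Require Import structures.
From mathcomp Require Import all_boot all_order all_algebra.
From mathcomp Require Import boolp classical_sets functions cardinality fsbigop.
Set Implicit Arguments. Unset Strict Implicit. Unset Printing Implicit Defensive.
Import Order.TTheory GRing.Theory Num.Theory.
Local Open Scope classical_set_scope.
Local Open Scope ring_scope.

Inductive mode := MX | MPhi | Mb | Mc | Mzeta | Meta | Mbeta | Mgamma.

Definition odd_mode (k : mode) : bool :=
  match k with Mb | Mc | Mzeta | Meta => true | _ => false end.

Section Brackets.
Variables (C : numClosedFieldType) (V : lmodType C).

Definition comm (A B : V -> V) : V -> V := fun v => A (B v) - B (A v).
Definition acomm (A B : V -> V) : V -> V := fun v => A (B v) + B (A v).

Definition gbracket (k l : mode) (A B : V -> V) : V -> V :=
  if odd_mode k && odd_mode l then acomm A B else comm A B.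

Definition kdelta (m n : int) : C := if m + n == 0 then 1 else 0.

Definition bracket_val (k l : mode) (m n : int) : C :=
  match k, l with
  | MX, MX => m%:~R * kdelta m n
  | MPhi, MPhi => m%:~R * kdelta m n
  | Mb, Mc | Mc, Mb => kdelta m n
  | Mzeta, Meta | Meta, Mzeta => kdelta m n
  | Mgamma, Mbeta => kdelta m n
  | Mbeta, Mgamma => - kdelta m n
  | _, _ => 0
  end.

(* A representation of the mode algebra by linear operators on V,
   of positive energy (every vector is killed by all modes of large index),
   as is the case for the Fock space. *)
Record mode_rep := ModeRep {
  op : mode -> int -> {linear V -> V};
  op_bracket : forall (k l : mode) (m n : int),
      gbracket k l (op k m) (op l n) = (fun v => bracket_val k l m n *: v);
  op_pos_energy : forall v : V, exists N : int,
      forall (k : mode) (n : int), N < n -> op k n v = 0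
}.

Variable M : mode_rep.

Local Notation x n := (op M MX n).
Local Notation ph n := (op M MPhi n).
Local Notation b n := (op M Mb n).
Local Notation c n := (op M Mc n).
Local Notation ze n := (op M Mzeta n).
Local Notation et n := (op M Meta n).
Local Notation be n := (op M Mbeta n).
Local Notation ga n := (op M Mgamma n).

Definition nonzero_ints : set int := [set n : int | n != 0].

Definition Lmatt (n : int) (v : V) : V :=
  2^-1 *: \sum_(m \in [set: int]) x m (x (n - m) v).

Definition Lgrav (n : int) (v : V) : V :=
  \sum_(m \in [set: int]) ((- m%:~R) *: be m (ga (n - m) v)
                           + 2^-1 *: ph m (ph (n - m) v))
  + (sqrtC 2 * 'i * (n + 1)%:~R) *: ph n v.

(* L'^{zeta eta}_n = - sum_{m <> n} m zeta_m eta_{n-m}  (eta_0 term removed) *)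
Definition Lzeta' (n : int) (v : V) : V :=
  - \sum_(m \in [set m : int | m != n]) m%:~R *: ze m (et (n - m) v).

(* For n <> 0 all normal orderings in dhat are trivial (the modes involved
   (anti)commute), so the normal-ordered products are plain products. *)
Definition dhat (v : V) : V :=
  \sum_(n \in nonzero_ints) c (- n) (Lmatt n v + Lgrav n v + Lzeta' n v)
  + \sum_(n \in nonzero_ints) et (- n) (be n v)
  - 2^-1 *: \sum_(m \in nonzero_ints)
        \sum_(n \in [set n : int | (n != 0) && (m + n != 0)])
          (m - n)%:~R *: c (- m) (c (- n) (b (n + m) v)).

Definition Xop (v : V) : V :=
  be 0 v + \sum_(n \in nonzero_ints) n%:~R *: c n (ze (- n) v).

Definition Pop (v : V) : V := ga 0 v.

Definition btilde (n : int) (v : V) : V := b n v + n%:~R *: ze n (ga 0 v).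
Definition etatilde (n : int) (v : V) : V := et n v + n%:~R *: c n (ga 0 v).

Definition optilde (k : mode) (n : int) : V -> V :=
  match k with
  | Mb => btilde n
  | Meta => etatilde n
  | _ => op M k n
  end.

End Brackets.

(* The operator X = beta_0 + sum_(n <> 0) n c_n zeta_(-n) brackets every mode into at most one
   mode: [b_j, X] = -j zeta_j, [eta_j, X] = -j c_j, [gamma_j, X] = delta_(j,0), all others
   vanish, while P = gamma_0 fails to commute only with beta_0.  The corrections j zeta_j gamma_0
   and j c_j gamma_0 in b~_j and eta~_j cancel exactly these brackets, and they do not change
   the graded brackets among oscillators of nonzero index: the only new contribution, to
   {b~_m, eta~_n}, is (m + n) delta_(m+n,0) gamma_0 = 0.
   In dhat, beta_0 occurs only with coefficient 0, so [dhat, P] = 0.  In [dhat, X] the terms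
   -n c_(-n) beta_n coming from L^grav cancel those coming from sum eta_(-n) beta_n, and the
   products c_(-n) c_(-k) zeta_(n+k), antisymmetric in (n, k), appear with the symmetric
   coefficient (n + k)^2 / 2, so they sum to zero.  Every infinite sum is finite on each vector
   by positive energy. *)

From HB Require Import structures.
From mathcomp Require Import all_boot all_order all_algebra.
From mathcomp Require Import boolp classical_sets functions cardinality fsbigop.
From mathcomp Require Import zify ring.
Set Implicit Arguments. Unset Strict Implicit. Unset Printing Implicit Defensive.
Import Order.TTheory GRing.Theory Num.Theory.
Local Open Scope classical_set_scope.
Local Open Scope ring_scope.

Section FinitelySupportedSums.
Variables (R : pzRingType) (V : lmodType R).

Definition window (K : nat) : seq int := [seq i%:Z - K%:Z | i <- iota 0 K.*2.+1].

Lemma window_uniq K : uniq (window K).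
Proof. by rewrite map_inj_uniq ?iota_uniq // => i j; lia. Qed.

Lemma mem_window K (i : int) : `|i| <= K%:Z -> i \in window K.
Proof.
move=> iK; apply/mapP; exists (absz (i + K%:Z)); first by rewrite mem_iota; lia.
lia.
Qed.

Definition vanish_beyond (A : set int) (f : int -> V) (K : nat) :=
  forall i, A i -> K%:Z < `|i| -> f i = 0.

Definition finsupp (A : set int) (f : int -> V) := exists K, vanish_beyond A f K.

Lemma vanish_beyond_le A f K K' : (K <= K')%N -> vanish_beyond A f K -> vanish_beyond A f K'.
Proof. by move=> KK' fK i Ai iK'; apply: fK => //; lia. Qed.

Lemma fsum_window A f K : vanish_beyond A f K ->
  \sum_(i \in A) f i = \sum_(i <- window K | i \in A) f i.
Proof.
move=> fK; rewrite [RHS]bigfs ?window_uniq //.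
  by apply: eq_fsbigl; apply/seteqP; split => i /=; rewrite inE.
move=> i /[!inE] Ai iK; apply: fK => //; rewrite ltNge; apply: contra iK.
exact: mem_window.
Qed.

Lemma finsuppD A f g : finsupp A f -> finsupp A g -> finsupp A (fun i => f i + g i).
Proof.
move=> [K fK] [L gL]; exists (maxn K L) => i Ai iKL.
by rewrite (vanish_beyond_le (leq_maxl K L) fK) ?(vanish_beyond_le (leq_maxr K L) gL) ?addr0.
Qed.

Lemma finsuppZ A f (a : int -> R) : finsupp A f -> finsupp A (fun i => a i *: f i).
Proof. by move=> [K fK]; exists K => i Ai iK; rewrite fK ?scaler0. Qed.

Lemma finsupp_linear A f (g : {linear V -> V}) : finsupp A f -> finsupp A (fun i => g (f i)).
Proof. by move=> [K fK]; exists K => i Ai iK; rewrite fK ?linear0. Qed.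

Lemma linear_fsum A f (g : {linear V -> V}) : finsupp A f ->
  g (\sum_(i \in A) f i) = \sum_(i \in A) g (f i).
Proof.
move=> [K fK]; have gfK : vanish_beyond A (fun i => g (f i)) K.
  by move=> i Ai iK; rewrite fK ?linear0.
by rewrite (fsum_window fK) (fsum_window gfK) linear_sum.
Qed.

Lemma fsumD A f g : finsupp A f -> finsupp A g ->
  \sum_(i \in A) (f i + g i) = \sum_(i \in A) f i + \sum_(i \in A) g i.
Proof.
move=> [K fK] [L gL]; set N := maxn K L.
have fN := vanish_beyond_le (leq_maxl K L) fK; have gN := vanish_beyond_le (leq_maxr K L) gL.
have fgN : vanish_beyond A (fun i => f i + g i) N by move=> i Ai iN; rewrite fN ?gN ?addr0.
by rewrite (fsum_window fN) (fsum_window gN) (fsum_window fgN) big_split.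
Qed.

Lemma fsumZ A f (a : R) : finsupp A f ->
  \sum_(i \in A) a *: f i = a *: \sum_(i \in A) f i.
Proof.
move=> [K fK]; have afK : vanish_beyond A (fun i => a *: f i) K.
  by move=> i Ai iK; rewrite fK ?scaler0.
by rewrite (fsum_window fK) (fsum_window afK) scaler_sumr.
Qed.

Lemma fsumN A f : finsupp A f -> \sum_(i \in A) - f i = - \sum_(i \in A) f i.
Proof.
move=> [K fK]; have nfK : vanish_beyond A (fun i => - f i) K by move=> i Ai iK; rewrite fK ?oppr0.
by rewrite (fsum_window fK) (fsum_window nfK) sumrN.
Qed.

Lemma fsumB A f g : finsupp A f -> finsupp A g ->
  \sum_(i \in A) (f i - g i) = \sum_(i \in A) f i - \sum_(i \in A) g i.
Proof.
move=> [K fK] [L gL]; set N := maxn K L.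
have fN := vanish_beyond_le (leq_maxl K L) fK; have gN := vanish_beyond_le (leq_maxr K L) gL.
have fgN : vanish_beyond A (fun i => f i - g i) N by move=> i Ai iN; rewrite fN ?gN ?subr0.
by rewrite (fsum_window fN) (fsum_window gN) (fsum_window fgN) sumrB.
Qed.

Lemma fsum_single A (f : int -> V) a : A a ->
  (forall i, A i -> i != a -> f i = 0) -> \sum_(i \in A) f i = f a.
Proof.
move=> Aa fA; rewrite -(fsbig_widen [set a] A f); first by rewrite fsbig_set1.
  by move=> i ->.
by move=> i [Ai /= ia]; apply: fA => //; apply/eqP.
Qed.

End FinitelySupportedSums.

Section CommutatorCalculus.
Variables (C : numClosedFieldType) (V : lmodType C) (G : {linear V -> V}).

Lemma commDl (f g : V -> V) w :
  comm (fun u => f u + g u) G w = comm f G w + comm g G w.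
Proof. by rewrite /comm linearD opprD addrACA. Qed.

Lemma commNl (f : V -> V) w : comm (fun u => - f u) G w = - comm f G w.
Proof. by rewrite /comm linearN opprK opprB addrC. Qed.

Lemma commZl (f : V -> V) a w : comm (fun u => a *: f u) G w = a *: comm f G w.
Proof. by rewrite /comm linearZ scalerBr. Qed.

Lemma comm_comp (f : {linear V -> V}) (g : V -> V) w :
  comm (fun u => f (g u)) G w = f (comm g G w) + comm f G (g w).
Proof. by rewrite /comm linearB addrA subrK. Qed.

Lemma comm_fsum A (F : int -> V -> V) w : (forall u, finsupp A (fun i => F i u)) ->
  comm (fun u => \sum_(i \in A) F i u) G w = \sum_(i \in A) comm (F i) G w.
Proof.
by move=> FA; rewrite /comm linear_fsum // fsumB //; apply: finsupp_linear.
Qed.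

End CommutatorCalculus.

Lemma sum2_sym_antisym_eq0 (R : numFieldType) (W : lmodType R) (I : Type) (r : seq I)
    (Pr : pred I) (s : I -> I -> R) (Z : I -> I -> W) :
    (forall i j, s i j = s j i) -> (forall i j, Z i j = - Z j i) ->
  \sum_(i <- r | Pr i) \sum_(j <- r | Pr j) s i j *: Z i j = 0.
Proof.
move=> s_sym Z_anti; set D := (X in X = 0).
have DN : D = - D.
  rewrite /D [LHS]exchange_big /= -sumrN; apply: eq_bigr => j _.
  by rewrite -sumrN; apply: eq_bigr => i _; rewrite Z_anti s_sym scalerN.
have : (2%:R : R) *: D = 0 by rewrite scaler_nat mulr2n {1}DN addNr.
by move/eqP; rewrite scaler_eq0 pnatr_eq0 /= => /eqP.
Qed.

Section ModeAlgebra.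
Variables (C : numClosedFieldType) (V : lmodType C) (M : mode_rep V).
Local Notation op := (op M).
Local Notation bv := (bracket_val C).
Local Notation X := (Xop M).
Local Notation P := (Pop M).
Local Notation nz := nonzero_ints.
Local Notation bt := (btilde M).
Local Notation et := (etatilde M).

Definition mode_sign (k l : mode) : C := if odd_mode k && odd_mode l then -1 else 1.

Lemma mode_sign_gammal l : mode_sign Mgamma l = 1. Proof. by case: l. Qed.
Lemma mode_sign_gammar k : mode_sign k Mgamma = 1. Proof. by case: k. Qed.
Lemma mode_sign_betar k : mode_sign k Mbeta = 1. Proof. by case: k. Qed.

Lemma gbracketE k l (A B : V -> V) v :
  gbracket k l A B v = A (B v) - mode_sign k l *: B (A v).
Proof.
rewrite /gbracket /mode_sign; case: ifP => _.
  by rewrite /acomm scaleN1r opprK.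
by rewrite /comm scale1r.
Qed.

Lemma gbracket_swap k l (A B : V -> V) (s : C) :
  (forall v, A (B v) = mode_sign k l *: B (A v) + s *: v) ->
  gbracket k l A B = (fun v => s *: v).
Proof. by move=> AB; apply/funext => v; rewrite gbracketE AB addrAC subrr add0r. Qed.

Lemma op_swap k l m n v :
  op k m (op l n v) = mode_sign k l *: op l n (op k m v) + bv k l m n *: v.
Proof.
have := congr1 (fun f => f v) (op_bracket M k l m n).
by rewrite gbracketE => <-; rewrite addrC subrK.
Qed.

Lemma op_vanish_beyond v : exists K : nat, forall k n, K%:Z < n -> op k n v = 0.
Proof. by have [N HN] := op_pos_energy M v; exists (absz N) => k n Nn; apply: HN; lia. Qed.

Lemma kdelta_eq0 m n : m + n != 0 -> kdelta C m n = 0.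
Proof. by rewrite /kdelta => /negbTE ->. Qed.

Lemma kdelta_eq1 m n : m + n = 0 -> kdelta C m n = 1.
Proof. by rewrite /kdelta => ->; rewrite eqxx. Qed.

Lemma op_kills_op k l m n v : bv k l m n = 0 -> op k m v = 0 -> op k m (op l n v) = 0.
Proof. by move=> klmn kv; rewrite op_swap kv linear0 scaler0 klmn scale0r addr0. Qed.

Lemma finsupp_Xterms v : finsupp nz (fun n => n%:~R *: op Mc n (op Mzeta (- n) v)).
Proof.
have [K HK] := op_vanish_beyond v; exists K => n _ nK.
have [Kn|nK'] := ltrP K%:Z n; first by rewrite op_kills_op ?scaler0 // HK.
by rewrite (HK Mzeta (- n)) ?linear0 ?scaler0 //; lia.
Qed.

Lemma linear_Xop : linear X.
Proof.
move=> a u w; rewrite /Xop linearP.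
under eq_fsbigr => n _ do
  rewrite (linearP (op Mzeta _)) (linearP (op Mc _)) scalerDr scalerA mulrC -scalerA.
rewrite fsumD; last exact: finsupp_Xterms; last exact: (finsuppZ (fun=> a) (finsupp_Xterms u)).
rewrite fsumZ; last exact: finsupp_Xterms.
by rewrite scalerDr -!addrA; congr (_ + _); rewrite addrCA.
Qed.

HB.instance Definition _ := GRing.isLinear.Build C V V *:%R X linear_Xop.

Lemma linear_Pop : linear P.
Proof. by move=> a u w; rewrite /Pop linearP. Qed.

HB.instance Definition _ := GRing.isLinear.Build C V V *:%R P linear_Pop.

Lemma comm_op_X_sum k j w : comm (op k j) X w = bv k Mbeta j 0 *: w +
  \sum_(n \in nz) n%:~R *: ((mode_sign k Mc * bv k Mzeta j (- n)) *: op Mc n w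
                            + bv k Mc j n *: op Mzeta (- n) w).
Proof.
have addKB (a b c d : V) : a + b + c - (a + d) = b + (c - d).
  by rewrite opprD addrACA [a + b]addrC addrK.
have sign_cz : mode_sign k Mc * mode_sign k Mzeta = 1.
  by case: k; rewrite /mode_sign /= ?mulrNN mulr1.
rewrite /comm /Xop linearD (linear_fsum (op k j) (finsupp_Xterms w)).
rewrite op_swap mode_sign_betar scale1r addKB -fsumB; last first.
- exact: finsupp_Xterms.
- exact: finsupp_linear (finsupp_Xterms w).
congr (_ + _); apply: eq_fsbigr => n _; rewrite linearZ /= -scalerBr; congr (_ *: _).
rewrite (op_swap k Mc) (op_swap k Mzeta) linearD !linearZ /= scalerDr !scalerA sign_cz.
by rewrite scale1r addrAC [op Mc n _ + _]addrC addrK.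
Qed.

Definition comm_X_val k j (w : V) : V :=
  match k with
  | Mb => - j%:~R *: op Mzeta j w
  | Meta => - j%:~R *: op Mc j w
  | Mgamma => kdelta C j 0 *: w
  | _ => 0
  end.

Lemma comm_op_X k j w : comm (op k j) X w = comm_X_val k j w.
Proof.
have no_sum (F : int -> V) : (forall n, n != 0 -> F n = 0) -> \sum_(n \in nz) F n = 0.
  by move=> F0; apply: fsbig1 => n; apply: F0.
rewrite comm_op_X_sum; case: k => /=;
  try by rewrite no_sum ?scale0r ?addr0 // => n _; rewrite mulr0 !scale0r addr0 scaler0.
- rewrite scale0r add0r; have [->|j0] := eqVneq j 0.
    rewrite no_sum ?mulr0z ?oppr0 ?scale0r // => n n0.
    by rewrite mulr0 scale0r kdelta_eq0 ?scale0r ?addr0 ?scaler0 // add0r.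
  rewrite (fsum_single (a := - j)) /=; last first.
  + move=> n _ nj; rewrite mulr0 scale0r add0r kdelta_eq0 ?scale0r ?scaler0 //.
    by apply: contra nj; rewrite addrC addr_eq0.
  + by rewrite /nonzero_ints /= oppr_eq0.
  by rewrite mulr0 scale0r add0r /kdelta subrr eqxx scale1r opprK rmorphN.
- rewrite scale0r add0r; have [->|j0] := eqVneq j 0.
    rewrite no_sum ?mulr0z ?oppr0 ?scale0r // => n n0.
    by rewrite kdelta_eq0 ?mulr0 ?scale0r ?addr0 ?scaler0 // add0r oppr_eq0.
  rewrite (fsum_single (a := j)) /=; last first.
  + move=> n _ nj; rewrite kdelta_eq0 ?mulr0 ?scale0r ?addr0 ?scaler0 //.
    by rewrite subr_eq0 eq_sym.
  + exact: j0.
  by rewrite /kdelta subrr eqxx mulr1 scale0r addr0 scalerA mulrN1 scaleNr.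
Qed.

Lemma comm_op_P k j w : comm (op k j) P w = bv k Mgamma j 0 *: w.
Proof. by rewrite /comm /Pop op_swap mode_sign_gammar scale1r addrAC subrr add0r. Qed.

Lemma comm_P_X : comm P X = (fun v => v).
Proof.
apply/funext => v; have := comm_op_X Mgamma 0 v; rewrite /comm /Pop /= => ->.
by rewrite kdelta_eq1 ?addr0 // scale1r.
Qed.


Lemma dressed_op_swapl k k' l (a : C) m n v :
    mode_sign k' l = mode_sign k l -> bv Mgamma l 0 n = 0 ->
  op k m (op l n v) + a *: op k' m (op Mgamma 0 (op l n v))
  = mode_sign k l *: op l n (op k m v + a *: op k' m (op Mgamma 0 v))
    + bv k l m n *: v + (a * bv k' l m n) *: op Mgamma 0 v.
Proof.
move=> sk' gl; rewrite (op_swap Mgamma l) gl scale0r addr0 mode_sign_gammal scale1r.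
rewrite (op_swap k' l) sk' (op_swap k l) (linearD (op l n)) (linearZZ (op l n)).
by rewrite !scalerDr !scalerA [mode_sign _ _ * a]mulrC addrA; congr (_ + _); exact: addrAC.
Qed.

Lemma dressed_op_swapr k l l' (a : C) m n v :
    mode_sign k l' = mode_sign k l -> bv k Mgamma m 0 = 0 ->
  op k m (op l n v + a *: op l' n (op Mgamma 0 v))
  = mode_sign k l *: (op l n (op k m v) + a *: op l' n (op Mgamma 0 (op k m v)))
    + bv k l m n *: v + (a * bv k l' m n) *: op Mgamma 0 v.
Proof.
move=> sl' kg; rewrite (linearD (op k m)) (linearZZ (op k m)) (op_swap k l') sl'.
rewrite (op_swap k Mgamma) kg scale0r addr0 mode_sign_gammar scale1r (op_swap k l).
by rewrite !scalerDr !scalerA [mode_sign _ _ * a]mulrC addrA; congr (_ + _); exact: addrAC.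
Qed.

Lemma btilde_op l m n v : bv Mgamma l 0 n = 0 ->
  bt m (op l n v) = mode_sign Mb l *: op l n (bt m v) + bv Mb l m n *: v
                    + (m%:~R * bv Mzeta l m n) *: op Mgamma 0 v.
Proof. exact: dressed_op_swapl. Qed.

Lemma etatilde_op l m n v : bv Mgamma l 0 n = 0 ->
  et m (op l n v) = mode_sign Meta l *: op l n (et m v) + bv Meta l m n *: v
                    + (m%:~R * bv Mc l m n) *: op Mgamma 0 v.
Proof. exact: dressed_op_swapl. Qed.

Lemma op_btilde k m n v : bv k Mgamma m 0 = 0 ->
  op k m (bt n v) = mode_sign k Mb *: bt n (op k m v) + bv k Mb m n *: v
                    + (n%:~R * bv k Mzeta m n) *: op Mgamma 0 v.
Proof. by apply: dressed_op_swapr; case: k. Qed.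

Lemma op_etatilde k m n v : bv k Mgamma m 0 = 0 ->
  op k m (et n v) = mode_sign k Meta *: et n (op k m v) + bv k Meta m n *: v
                    + (n%:~R * bv k Mc m n) *: op Mgamma 0 v.
Proof. by apply: dressed_op_swapr; case: k. Qed.

Lemma linear_btilde n : linear (bt n).
Proof.
move=> a u w; rewrite /btilde (linearP (op Mb n)) (linearP (op Mgamma 0)) (linearP (op Mzeta n)).
by rewrite !scalerDr !scalerA mulrC addrACA.
Qed.

Lemma linear_etatilde n : linear (et n).
Proof.
move=> a u w; rewrite /etatilde (linearP (op Meta n)) (linearP (op Mgamma 0)) (linearP (op Mc n)).
by rewrite !scalerDr !scalerA mulrC addrACA.
Qed.

HB.instance Definition _ n := GRing.isLinear.Build C V V *:%R (bt n) (linear_btilde n).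
HB.instance Definition _ n := GRing.isLinear.Build C V V *:%R (et n) (linear_etatilde n).

Lemma intr_add_kdelta m n : (m + n)%:~R * kdelta C m n = 0.
Proof. by rewrite /kdelta; case: eqP => [->|_]; rewrite ?mulr0 // mulr1. Qed.

Lemma btilde_anticomm m n v : bt m (bt n v) = - bt n (bt m v).
Proof.
rewrite [bt n v]/btilde (linearD (bt m)) (linearZZ (bt m)) /= !btilde_op //=.
by rewrite !mulr0 !scale0r !addr0 scale1r !scaleN1r scalerN -opprD.
Qed.

Lemma etatilde_anticomm m n v : et m (et n v) = - et n (et m v).
Proof.
rewrite [et n v]/etatilde (linearD (et m)) (linearZZ (et m)) /= !etatilde_op //=.
by rewrite !mulr0 !scale0r !addr0 scale1r !scaleN1r scalerN -opprD.
Qed.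

Lemma btilde_etatilde_anticomm m n v : bt m (et n v) = - et n (bt m v).
Proof.
rewrite [et n v]/etatilde (linearD (bt m)) (linearZZ (bt m)) /= !btilde_op //=.
rewrite !mulr0 !scale0r !addr0 scale1r !scaleN1r scalerDr scalerN scalerA addrACA.
by rewrite -scalerDl -mulrDl -intrD intr_add_kdelta scale0r addr0 -opprD.
Qed.

Lemma optilde_bracket k l m n : m != 0 -> n != 0 ->
  gbracket k l (optilde M k m) (optilde M l n) = (fun v => bv k l m n *: v).
Proof.
move=> m0 n0; apply: gbracket_swap => v.
have gn l' : bv Mgamma l' 0 n = 0 by case: l' => //=; rewrite kdelta_eq0 // add0r.
have kg k' : bv k' Mgamma m 0 = 0 by case: k' => //=; rewrite kdelta_eq0 ?oppr0 // addr0.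
case: k; case: l => /=; try exact: op_swap.
all: rewrite ?(btilde_op m v (gn _)) ?(etatilde_op m v (gn _)).
all: rewrite ?(op_btilde n v (kg _)) ?(op_etatilde n v (kg _)) /= ?mulr0 ?scale0r ?addr0 //.
- by rewrite btilde_anticomm scaleN1r.
- by rewrite btilde_etatilde_anticomm scaleN1r.
- by rewrite btilde_etatilde_anticomm scaleN1r opprK.
- by rewrite etatilde_anticomm scaleN1r.
Qed.

Lemma btilde_comm_X n w : comm (bt n) X w = 0.
Proof.
rewrite /btilde commDl commZl (comm_comp X (op Mzeta n) (op Mgamma 0)) !comm_op_X /=.
by rewrite (kdelta_eq1 (addr0 0)) addr0 scale1r scaleNr addNr.
Qed.

Lemma etatilde_comm_X n w : comm (et n) X w = 0.
Proof.
rewrite /etatilde commDl commZl (comm_comp X (op Mc n) (op Mgamma 0)) !comm_op_X /=.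
by rewrite (kdelta_eq1 (addr0 0)) addr0 scale1r scaleNr addNr.
Qed.

Lemma btilde_comm_P n w : comm (bt n) P w = 0.
Proof.
rewrite /btilde commDl commZl (comm_comp P (op Mzeta n) (op Mgamma 0)) !comm_op_P /=.
by rewrite !scale0r linear0 addr0 scaler0 addr0.
Qed.

Lemma etatilde_comm_P n w : comm (et n) P w = 0.
Proof.
rewrite /etatilde commDl commZl (comm_comp P (op Mc n) (op Mgamma 0)) !comm_op_P /=.
by rewrite !scale0r linear0 addr0 scaler0 addr0.
Qed.

Lemma optilde_comm_XP k n : n != 0 ->
  comm (optilde M k n) X = (fun _ => 0) /\ comm (optilde M k n) P = (fun _ => 0).
Proof.
move=> n0; have n0' : kdelta C n 0 = 0 by rewrite kdelta_eq0 // addr0.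
split; apply/funext => w; case: k => /=;
  rewrite ?btilde_comm_X ?etatilde_comm_X ?btilde_comm_P ?etatilde_comm_P //.
all: by rewrite ?comm_op_X ?comm_op_P /= ?n0' ?oppr0 ?scale0r.
Qed.

End ModeAlgebra.

Section Dhat.
Variables (C : numClosedFieldType) (V : lmodType C) (M : mode_rep V).
Local Notation op := (op M).
Local Notation bv := (bracket_val C).
Local Notation X := (Xop M).
Local Notation P := (Pop M).
Local Notation nz := nonzero_ints.
Local Notation Lm := (Lmatt M).
Local Notation Lg := (Lgrav M).
Local Notation Lz := (Lzeta' M).

Lemma kdelta_sub_eq0 m n : n != 0 -> kdelta C m (n - m) = 0.
Proof. by move=> n0; rewrite kdelta_eq0 // addrC subrK. Qed.

Lemma finsupp_op_pair k l A n v : (forall m, bv k l m (n - m) = 0) ->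
  finsupp A (fun m => op k m (op l (n - m) v)).
Proof.
move=> kl; have [K HK] := op_vanish_beyond M v; exists (K + absz n)%N => m _ mK.
have [Km|mK'] := ltrP K%:Z m; first by rewrite op_kills_op // HK.
by rewrite (HK l (n - m)) ?linear0 //; lia.
Qed.

Lemma finsupp_Lmatt_terms n v : n != 0 ->
  finsupp setT (fun m => op MX m (op MX (n - m) v)).
Proof. by move=> n0; apply: finsupp_op_pair => m /=; rewrite kdelta_sub_eq0 ?mulr0. Qed.

Lemma finsupp_Lgrav_terms n v : n != 0 ->
  finsupp setT (fun m => (- m%:~R) *: op Mbeta m (op Mgamma (n - m) v)
                         + 2^-1 *: op MPhi m (op MPhi (n - m) v)).
Proof.
move=> n0; apply: finsuppD; apply: (finsuppZ (fun m => _)); apply: finsupp_op_pair => m /=.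
  by rewrite kdelta_sub_eq0 ?oppr0.
by rewrite kdelta_sub_eq0 ?mulr0.
Qed.

Lemma finsupp_Lzeta_terms n v : n != 0 ->
  finsupp [set m | m != n] (fun m => m%:~R *: op Mzeta m (op Meta (n - m) v)).
Proof.
move=> n0; apply: (finsuppZ (fun m => m%:~R)); apply: finsupp_op_pair => m /=.
exact: kdelta_sub_eq0.
Qed.

Definition Ltot n v := Lm n v + Lg n v + Lz n v.

Lemma Ltot_high_eq0 n u (K : nat) : (forall k j, K%:Z < j -> op k j u = 0) ->
  (K + K)%:Z < n -> Ltot n u = 0.
Proof.
move=> HK nK; have n0 : n != 0 by lia.
have term0 k l m : (forall m, bv k l m (n - m) = 0) -> op k m (op l (n - m) u) = 0.
  move=> kl; have [Km|mK] := ltrP K%:Z m; first by rewrite op_kills_op // HK.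
  by rewrite (HK l (n - m)) ?linear0 //; lia.
have Lm0 : Lm n u = 0.
  rewrite /Lmatt fsbig1 ?scaler0 // => m _.
  by apply: term0 => m' /=; rewrite kdelta_sub_eq0 ?mulr0.
have Lg0 : Lg n u = 0.
  rewrite /Lgrav fsbig1 ?(HK MPhi n) ?scaler0 ?addr0 //; first lia.
  by move=> m _; rewrite !term0 ?scaler0 ?addr0 // => m' /=; rewrite kdelta_sub_eq0 ?mulr0 ?oppr0.
have Lz0 : Lz n u = 0.
  rewrite /Lzeta' fsbig1 ?oppr0 // => m _.
  by rewrite term0 ?scaler0 // => m' /=; rewrite kdelta_sub_eq0.
by rewrite /Ltot Lm0 Lg0 Lz0 !addr0.
Qed.

(* c_(-n) anticommutes with every mode occurring in L_n, so it kills L_n u along with u. *)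
Lemma c_Ltot_eq0 n u : n != 0 -> op Mc (- n) u = 0 -> op Mc (- n) (Ltot n u) = 0.
Proof.
move=> n0 cu; have c2 k l m j : bv Mc k (- n) m = 0 -> bv Mc l (- n) j = 0 ->
    op Mc (- n) (op k m (op l j u)) = 0.
  by move=> ck cl; rewrite op_kills_op // op_kills_op.
have cLm : op Mc (- n) (Lm n u) = 0.
  rewrite /Lmatt linearZ (linear_fsum (op Mc (- n)) (finsupp_Lmatt_terms u n0)) /=.
  by rewrite fsbig1 ?scaler0 // => m _; rewrite c2.
have cLg : op Mc (- n) (Lg n u) = 0.
  rewrite /Lgrav linearD linearZ (linear_fsum (op Mc (- n)) (finsupp_Lgrav_terms u n0)) /=.
  rewrite fsbig1 ?op_kills_op ?scaler0 ?addr0 // => m _.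
  by rewrite linearD !linearZ /= !c2 ?scaler0 ?addr0.
have cLz : op Mc (- n) (Lz n u) = 0.
  rewrite /Lzeta' linearN (linear_fsum (op Mc (- n)) (finsupp_Lzeta_terms u n0)) /=.
  by rewrite fsbig1 ?oppr0 // => m _; rewrite linearZ /= c2 ?scaler0.
by rewrite /Ltot linearD cLz addr0 linearD cLm cLg addr0.
Qed.

Lemma finsupp_dhat_cL u : finsupp nz (fun n => op Mc (- n) (Ltot n u)).
Proof.
have [K HK] := op_vanish_beyond M u; exists (K + K)%N => n n0 nK.
have [Kn|nK'] := ltrP (K + K)%:Z n; first by rewrite (Ltot_high_eq0 HK Kn) linear0.
by rewrite c_Ltot_eq0 // HK //; lia.
Qed.

Lemma finsupp_dhat_etabeta u : finsupp nz (fun n => op Meta (- n) (op Mbeta n u)).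
Proof.
have [K HK] := op_vanish_beyond M u; exists K => n _ nK.
have [Kn|nK'] := ltrP K%:Z n; first by rewrite (HK Mbeta n) ?linear0.
by rewrite op_kills_op // HK //; lia.
Qed.

Definition ccb_index m := [set n : int | (n != 0) && (m + n != 0)].

Lemma finsupp_ccb_terms m u : m != 0 -> finsupp (ccb_index m)
  (fun n => (m - n)%:~R *: op Mc (- m) (op Mc (- n) (op Mb (n + m) u))).
Proof.
move=> m0; have [K HK] := op_vanish_beyond M u; exists (K + absz m)%N => n n0 nK /=.
have [Kn|nK'] := ltrP (K + absz m)%:Z n.
  by rewrite (HK Mb (n + m)) ?linear0 ?scaler0 //; lia.
rewrite (@op_kills_op _ _ M Mc Mb) ?linear0 ?scaler0 //; last by apply: HK; lia.
by rewrite /= kdelta_eq0 //; lia.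
Qed.

Lemma finsupp_dhat_ccb u : finsupp nz (fun m => \sum_(n \in ccb_index m)
  (m - n)%:~R *: op Mc (- m) (op Mc (- n) (op Mb (n + m) u))).
Proof.
have [K HK] := op_vanish_beyond M u; exists (K + K)%N => m _ mK /=.
apply: fsbig1 => n /andP[n0 mn0].
have [Km|mK'] := ltrP (K + K)%:Z m.
  have [Knm|nmK] := ltrP K%:Z (n + m); first by rewrite (HK Mb (n + m)) ?linear0 ?scaler0.
  have cnu : op Mc (- n) u = 0 by apply: HK; lia.
  have cnb : op Mc (- n) (op Mb (n + m) u) = 0.
    by rewrite op_kills_op //= kdelta_eq0 //; lia.
  by rewrite cnb linear0 scaler0.
have cmu : op Mc (- m) u = 0 by apply: HK; lia.
have cmb : op Mc (- m) (op Mb (n + m) u) = 0.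
  by rewrite op_kills_op //= kdelta_eq0 //; lia.
by rewrite op_kills_op ?scaler0.
Qed.

Definition dhat_cL v := \sum_(n \in nz) op Mc (- n) (Ltot n v).
Definition dhat_etabeta v := \sum_(n \in nz) op Meta (- n) (op Mbeta n v).
Definition dhat_ccb v := \sum_(m \in nz) \sum_(n \in ccb_index m)
  (m - n)%:~R *: op Mc (- m) (op Mc (- n) (op Mb (n + m) v)).

Lemma comm_dhat (G : {linear V -> V}) w : comm (dhat M) G w
  = comm dhat_cL G w + comm dhat_etabeta G w - 2^-1 *: comm dhat_ccb G w.
Proof.
have -> : dhat M = fun v => dhat_cL v + dhat_etabeta v + - (2^-1 *: dhat_ccb v) by [].
by rewrite commDl commNl commZl commDl.
Qed.

Lemma comm_Ltot_P n w : n != 0 -> comm (Ltot n) P w = 0.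
Proof.
move=> n0; have cLm : comm (Lm n) P w = 0.
  rewrite /Lmatt commZl comm_fsum; last by move=> u; apply: finsupp_Lmatt_terms.
  rewrite fsbig1 ?scaler0 // => m _.
  by rewrite (comm_comp P (op MX m) (op MX (n - m))) !comm_op_P /= !scale0r linear0 addr0.
have cLg : comm (Lg n) P w = 0.
  rewrite /Lgrav commDl comm_fsum; last by move=> u; apply: finsupp_Lgrav_terms.
  rewrite commZl comm_op_P /= scale0r scaler0 addr0; apply: fsbig1 => m _.
  rewrite commDl !commZl (comm_comp P (op Mbeta m)) (comm_comp P (op MPhi m)) !comm_op_P /=.
  rewrite !scale0r !linear0 !addr0 scaler0 addr0.
  have [->|m0] := eqVneq m 0; first by rewrite mulr0z oppr0 scale0r.
  by rewrite kdelta_eq0 ?addr0 // oppr0 scale0r addr0 scaler0.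
have cLz : comm (Lz n) P w = 0.
  rewrite /Lzeta' commNl comm_fsum; last by move=> u; apply: finsupp_Lzeta_terms.
  rewrite fsbig1 ?oppr0 // => m _.
  by rewrite commZl (comm_comp P (op Mzeta m)) !comm_op_P /= !scale0r linear0 addr0 scaler0.
by rewrite /Ltot commDl cLz addr0 commDl cLm cLg addr0.
Qed.

Lemma comm_dhat_P : comm (dhat M) P = (fun _ => 0).
Proof.
apply/funext => w; rewrite comm_dhat.
have cL : comm dhat_cL P w = 0.
  rewrite /dhat_cL comm_fsum; last exact: finsupp_dhat_cL.
  apply: fsbig1 => n n0.
  by rewrite (comm_comp P (op Mc (- n))) comm_op_P comm_Ltot_P // linear0 scale0r addr0.
have cEB : comm dhat_etabeta P w = 0.
  rewrite /dhat_etabeta comm_fsum; last exact: finsupp_dhat_etabeta.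
  apply: fsbig1 => n n0.
  rewrite (comm_comp P (op Meta (- n))) !comm_op_P /= scale0r addr0.
  by rewrite kdelta_eq0 ?addr0 ?oppr0 // scale0r linear0.
have cCCB : comm dhat_ccb P w = 0.
  rewrite /dhat_ccb comm_fsum; last exact: finsupp_dhat_ccb.
  apply: fsbig1 => m m0; rewrite comm_fsum; last by move=> u; apply: finsupp_ccb_terms.
  apply: fsbig1 => n _.
  rewrite commZl (comm_comp P (op Mc (- m))) (comm_comp P (op Mc (- n))) !comm_op_P /=.
  by rewrite !scale0r !linear0 !addr0 linear0 scaler0.
by rewrite cL cEB cCCB scaler0 subr0 addr0.
Qed.

Lemma comm_Ltot_X n w : n != 0 -> comm (Ltot n) X w = (- n%:~R) *: op Mbeta n w
  - \sum_(m \in [set m : int | m != n]) m%:~R *: op Mzeta m (- (n - m)%:~R *: op Mc (n - m) w).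
Proof.
move=> n0; have cLm : comm (Lm n) X w = 0.
  rewrite /Lmatt commZl comm_fsum; last by move=> u; apply: finsupp_Lmatt_terms.
  rewrite fsbig1 ?scaler0 // => m _.
  by rewrite (comm_comp X (op MX m) (op MX (n - m))) !comm_op_X /= linear0 addr0.
have cLg : comm (Lg n) X w = (- n%:~R) *: op Mbeta n w.
  rewrite /Lgrav commDl comm_fsum; last by move=> u; apply: finsupp_Lgrav_terms.
  rewrite commZl comm_op_X /= scaler0 addr0.
  under eq_fsbigr => m _ do rewrite commDl !commZl (comm_comp X (op Mbeta m))
    (comm_comp X (op MPhi m)) !comm_op_X /= !addr0 linear0 scaler0 addr0.
  rewrite (fsum_single (a := n)) // ?subrr ?(kdelta_eq1 C (addr0 0)) ?scale1r //.
  move=> m _ mn; rewrite kdelta_eq0 ?scale0r ?linear0 ?scaler0 //.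
  by rewrite addr0 subr_eq0 eq_sym.
have cLz : comm (Lz n) X w = - \sum_(m \in [set m : int | m != n])
    m%:~R *: op Mzeta m (- (n - m)%:~R *: op Mc (n - m) w).
  rewrite /Lzeta' commNl comm_fsum; last by move=> u; apply: finsupp_Lzeta_terms.
  by under eq_fsbigr => m _ do rewrite commZl (comm_comp X (op Mzeta m)) !comm_op_X /= addr0.
by rewrite /Ltot commDl cLz commDl cLm cLg add0r.
Qed.

Definition ccz w n k := op Mc (- n) (op Mc (- k) (op Mzeta (n + k) w)).

Lemma ccz_antisym w n k : ccz w n k = - ccz w k n.
Proof. by rewrite /ccz (op_swap M Mc Mc) /= scale0r addr0 scaleN1r [k + n]addrC. Qed.

Lemma shift_bij n : set_bij nz [set m : int | m != n] (fun k => n + k).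
Proof.
split => [k|k j _ _ /= /addrI //|m /= mn]; first by rewrite /nonzero_ints /=; lia.
by exists (m - n); [rewrite /nonzero_ints /=; lia | rewrite addrCA subrr addr0].
Qed.

Lemma c_comm_Ltot_X n w : n != 0 -> op Mc (- n) (comm (Ltot n) X w)
  = (- n%:~R) *: op Mc (- n) (op Mbeta n w) + \sum_(k \in nz) ((n + k) * k)%:~R *: ccz w n k.
Proof.
move=> n0; rewrite comm_Ltot_X // (linearB (op Mc (- n))) (linearZZ (op Mc (- n))).
congr (_ + _); under eq_fsbigr => m _ do rewrite (linearZZ (op Mzeta m)) scalerA.
have zc : finsupp [set m | m != n]
    (fun m => (m%:~R * - (n - m)%:~R) *: op Mzeta m (op Mc (n - m) w)).
  by apply: (finsuppZ (fun m => m%:~R * - (n - m)%:~R)); apply: finsupp_op_pair.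
rewrite (linear_fsum (op Mc (- n)) zc) -fsumN; last exact: finsupp_linear zc.
rewrite (reindex_fsbig (fun k => n + k) _ _ _ (shift_bij n)); apply: eq_fsbigr => k _.
have -> : n - (n + k) = - k by rewrite opprD addNKr.
rewrite (linearZZ (op Mc (- n))) (op_swap M Mzeta Mc) /= scale0r addr0.
by rewrite (linearZZ (op Mc (- n))) scaleN1r scalerN opprK intrM rmorphN opprK.
Qed.

Lemma comm_dhat_cL_X w : comm dhat_cL X w = \sum_(n \in nz)
  ((- n%:~R) *: op Mc (- n) (op Mbeta n w) + \sum_(k \in nz) ((n + k) * k)%:~R *: ccz w n k).
Proof.
rewrite /dhat_cL comm_fsum; last exact: finsupp_dhat_cL.
apply: eq_fsbigr => n /[!inE] n0.
by rewrite (comm_comp X (op Mc (- n))) comm_op_X addr0 c_comm_Ltot_X.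
Qed.

Lemma comm_dhat_etabeta_X w :
  comm dhat_etabeta X w = \sum_(n \in nz) n%:~R *: op Mc (- n) (op Mbeta n w).
Proof.
rewrite /dhat_etabeta comm_fsum; last exact: finsupp_dhat_etabeta.
apply: eq_fsbigr => n _.
by rewrite (comm_comp X (op Meta (- n))) !comm_op_X /= linear0 add0r rmorphN opprK.
Qed.

Lemma comm_dhat_ccb_X w : comm dhat_ccb X w
  = \sum_(m \in nz) \sum_(k \in nz) ((m - k) * - (m + k))%:~R *: ccz w m k.
Proof.
rewrite /dhat_ccb comm_fsum; last exact: finsupp_dhat_ccb.
apply: eq_fsbigr => m /[!inE] m0.
rewrite comm_fsum; last by move=> u; apply: finsupp_ccb_terms.
transitivity (\sum_(k \in ccb_index m) ((m - k) * - (m + k))%:~R *: ccz w m k).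
  apply: eq_fsbigr => k _.
  rewrite commZl (comm_comp X (op Mc (- m))) (comm_comp X (op Mc (- k))) !comm_op_X /= !addr0.
  by rewrite (linearZZ (op Mc (- k))) (linearZZ (op Mc (- m))) scalerA [k + m]addrC intrM rmorphN.
apply: fsbig_widen => [k /andP[] // | k [/= k0 notA]].
have -> : m + k = 0 by apply/eqP/negPn/negP => mk; apply: notA; exact/andP.
by rewrite /preimage /= oppr0 mulr0 scale0r.
Qed.

Lemma dhat_X_cancel w :
  \sum_(n \in nz) ((- n%:~R) *: op Mc (- n) (op Mbeta n w)
                   + \sum_(k \in nz) ((n + k) * k)%:~R *: ccz w n k)
  + \sum_(n \in nz) n%:~R *: op Mc (- n) (op Mbeta n w)
  - 2^-1 *: \sum_(m \in nz) \sum_(k \in nz) ((m - k) * - (m + k))%:~R *: ccz w m k = 0.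
Proof.
have [K HK] := op_vanish_beyond M w; set N := (K + K)%N.
have ccz0 n k : (N%:Z < `|n|) || (N%:Z < `|k|) -> ccz w n k = 0.
  move=> nkN; have [nK|Kn] := ltrP n (- K%:Z).
    by rewrite /ccz op_kills_op // op_kills_op // HK //; lia.
  have [kK|Kk] := ltrP k (- K%:Z).
    by rewrite /ccz (@op_kills_op _ _ M Mc Mzeta) ?linear0 // HK //; lia.
  by rewrite /ccz (HK Mzeta (n + k)) ?linear0 //; lia.
have cb0 n : N%:Z < `|n| -> op Mc (- n) (op Mbeta n w) = 0.
  move=> nN; have [Kn|nK] := ltrP K%:Z n; first by rewrite (HK Mbeta n) ?linear0.
  by rewrite op_kills_op // HK //; lia.
have inner n (s : int -> int -> int) : vanish_beyond nz (fun k => (s n k)%:~R *: ccz w n k) N.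
  by move=> k _ kN; rewrite ccz0 ?scaler0 // kN orbT.
under eq_fsbigr => n _ do rewrite (fsum_window (inner n (fun n k => (n + k) * k))).
under [X in _ - 2^-1 *: X]eq_fsbigr => n _ do
  rewrite (fsum_window (inner n (fun n k => (n - k) * - (n + k)))).
rewrite (fsum_window (K := N)); last first.
  move=> n _ nN /=; rewrite cb0 // scaler0 add0r big1 // => k _.
  by rewrite ccz0 ?scaler0 // nN.
rewrite (fsum_window (K := N)); last by move=> n _ nN; rewrite cb0 // scaler0.
rewrite (fsum_window (K := N)); last first.
  by move=> n _ nN; rewrite big1 // => k _; rewrite ccz0 ?scaler0 // nN.
rewrite [X in X + _ - _]big_split /= [X in X - _]addrAC -big_split /= big1 ?add0r; last first.
  by move=> n _; rewrite scaleNr addNr.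
rewrite scaler_sumr -sumrB.
under eq_bigr => n _ do rewrite scaler_sumr -sumrB.
under eq_bigr => n _ do under eq_bigr => k _ do rewrite scalerA -scalerBl.
apply: sum2_sym_antisym_eq0; last exact: ccz_antisym.
(* the coefficient (n + k) k + (n - k) (n + k) / 2 = (n + k)^2 / 2 is symmetric *)
by move=> n k; rewrite !(intrM, intrD, intrN, intrB); field.
Qed.

Lemma comm_dhat_X : comm (dhat M) X = (fun _ => 0).
Proof.
apply/funext => w; rewrite comm_dhat comm_dhat_cL_X comm_dhat_etabeta_X comm_dhat_ccb_X.
exact: dhat_X_cancel.
Qed.

End Dhat.

Theorem mainTheorem2 (C : numClosedFieldType) (V : lmodType C) (M : mode_rep V) :
  comm (Pop M) (Xop M) = (fun v => v)
  /\ (forall (k l : mode) (m n : int), m != 0 -> n != 0 ->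
        gbracket k l (optilde M k m) (optilde M l n)
        = (fun v => bracket_val C k l m n *: v))
  /\ (forall (k : mode) (n : int), n != 0 ->
        comm (optilde M k n) (Xop M) = (fun _ => 0)
        /\ comm (optilde M k n) (Pop M) = (fun _ => 0))
  /\ comm (dhat M) (Xop M) = (fun _ => 0)
  /\ comm (dhat M) (Pop M) = (fun _ => 0).
Proof.
split; first exact: comm_P_X.
split; first exact: optilde_bracket.
split; first exact: optilde_comm_XP.
split; [exact: comm_dhat_X | exact: comm_dhat_P].
Qed.
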